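(* Let $X$ be the circle $\mathbb{S}^1$ or the interval $[0,1]$, and let $f\colon X\to X$ be a homeomorphism. If $\mu$ is a Borel probability measure that is inner-distal with respect to $f$, then $\operatorname{supp}(\mu)\subseteq\Omega(f)$.
   Context: $\mathcal{P}(x)=\{y\colon \inf_{n\in\mathbb{Z}} d(f^n(x),f^n(y))=0\}$; $\mu$ is inner-distal w.r.t. $f$ if $\mu(\operatorname{Int}\mathcal{P}(x))=0$ for all $x$. $\operatorname{supp}(\mu)=\{x\colon \mu(U)>0$ for every neighborhood $U$ of $x\}$. The non-wandering set $\Omega(f)$ is the set of $x$ such that $U\cap\bigcup_{n\ge1}f^n(U)\neq\emptyset$ for every neighborhood $U$ of $x$. *)

From HB Require Import structures.
From mathcomp Require Import all_boot all_order all_algebra.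
From mathcomp Require Import all_classical all_reals all_analysis.
Set Implicit Arguments. Unset Strict Implicit. Unset Printing Implicit Defensive.
Import Order.TTheory GRing.Theory Num.Theory.
Import numFieldNormedType.Exports.
Local Open Scope classical_set_scope.
Local Open Scope ring_scope.

(* Both spaces are realised as compact subsets of the plane R x R, with the
   Euclidean metric (inducing the usual topology on each). *)
Notation pt R := (R * R)%type.
Section Defs.
Variable R : realType.
Local Notation pt := (R * R)%type.

Definition edist (p q : pt) : R :=
  Num.sqrt ((p.1 - q.1) ^+ 2 + (p.2 - q.2) ^+ 2).

Definition circle : set pt := [set p | p.1 ^+ 2 + p.2 ^+ 2 = 1].
Definition unit_interval : set pt := [set p | 0 <= p.1 <= 1 /\ p.2 = 0].

Definition rel_interior (X A : set pt) : set pt :=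
  [set x | X x /\ A x /\ exists2 e : R, 0 < e &
     forall y, X y -> edist x y < e -> A y].

Definition rel_open (X A : set pt) : Prop := A `<=` X /\ A = rel_interior X A.

Definition homeomorphism_on (X : set pt) (f g : pt -> pt) : Prop :=
  [/\ (forall x, X x -> X (f x)),
      (forall x, X x -> X (g x)),
      (forall x, X x -> g (f x) = x),
      (forall x, X x -> f (g x) = x) &
      ({within X, continuous f}) /\ ({within X, continuous g})].

(* integer iterates f^n, with f^(-k) = g^k for the inverse g *)
Definition iterz (f g : pt -> pt) (n : int) (x : pt) : pt :=
  match n with
  | Posz k => iter k f x
  | Negz k => iter k.+1 g x
  end.

Definition proximal_cell (X : set pt) (f g : pt -> pt) (x : pt) : set pt :=
  [set y | X y /\ forall e : R, 0 < e ->
     exists n : int, edist (iterz f g n x) (iterz f g n y) < e].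

Definition inner_distal (X : set pt) (f g : pt -> pt)
  (mu : set pt -> \bar R) : Prop :=
  forall x, X x -> mu (rel_interior X (proximal_cell X f g x)) = 0%E.

Definition measure_support (X : set pt) (mu : set pt -> \bar R) : set pt :=
  [set x | X x /\ forall U, rel_open X U -> U x -> (0 < mu U)%E].

Definition nonwandering (X : set pt) (f : pt -> pt) : set pt :=
  [set x | X x /\ forall U, U `<=` X -> rel_interior X U x ->
     exists n : nat, (1 <= n)%N /\ exists2 y, U y & U (iter n f y)].
End Defs.

From Pilot Require Import Defs.
From HB Require Import structures.
From mathcomp Require Import all_boot all_order all_algebra.
From mathcomp Require Import all_classical all_reals all_analysis.
From mathcomp Require Import lra ring.
Set Implicit Arguments. Unset Strict Implicit. Unset Printing Implicit Defensive.
Import Order.TTheory GRing.Theory Num.Theory.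
Import numFieldNormedType.Exports.
Local Open Scope classical_set_scope.
Local Open Scope ring_scope.

(* Suppose x is in the support of mu but has a neighbourhood U with U and the
   f^n(U), n >= 1, pairwise disjoint.  Join x to any nearby z by a short path
   inside U.  Its images under the iterates f^n are pairwise disjoint arcs, and
   in the one-dimensional space X every arc joining two points at distance
   >= e passes through one of finitely many points; so by pigeonhole
   d(f^n x, f^n z) < e for some n.  Hence a whole neighbourhood of x lies in
   the proximal cell P(x), and mu(Int P(x)) > 0 because x is in the support. *)

Lemma within_continuous_comp_within {T U V : topologicalType}
    (A : set T) (B : set U) (G : T -> U) (F : U -> V) :
  (forall a, A a -> B (G a)) -> {within A, continuous G} ->
  {within B, continuous F} -> {within A, continuous (F \o G)}.
Proof.
move=> AB /subspace_continuousP cG /subspace_continuousP cF.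
apply/subspace_continuousP => x Ax P /(cF _ (AB _ Ax)).
rewrite /= !nbhs_simpl withinE => -[Q /(cG x Ax)] /=.
rewrite !nbhs_simpl /within /= => GQ QE.
near=> y => Ay.
have : (Q `&` B) (G y) by split; [exact: (near GQ y) | exact: AB].
by rewrite -QE => -[].
Unshelve. all: by end_near.
Qed.

Lemma fst_continuous {T U : topologicalType} : continuous (@fst T U).
Proof. by move=> p; exact: cvg_fst. Qed.

Lemma snd_continuous {T U : topologicalType} : continuous (@snd T U).
Proof. by move=> p; exact: cvg_snd. Qed.

Lemma pigeonhole_seq (T : eqType) (s : seq T) (F : nat -> T) :
  (forall n, (n <= size s)%N -> F n \in s) ->
  exists n m, [/\ (n < m)%N, (m <= size s)%N & F n = F m].
Proof.
move=> Fs; apply: contrapT => noF.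
have Finj : {in iota 0 (size s).+1 &, injective F}.
  move=> n m; rewrite !mem_iota /= !add0n !ltnS => ns ms Fnm.
  apply: contrapT => nm; apply: noF.
  case: (ltngtP n m) nm => // [nltm|mltn] _.
  - by exists n, m.
  - by exists m, n.
have Fsub : {subset map F (iota 0 (size s).+1) <= s}.
  move=> y /mapP [n]; rewrite mem_iota add0n ltnS => /andP [_ ns] ->; exact: Fs.
have := uniq_leq_size (etrans (map_inj_in_uniq Finj) (iota_uniq 0 _)) Fsub.
by rewrite size_map size_iota ltnn.
Qed.

Section Plane.
Variable R : realType.
Implicit Types (p q w x z : pt R) (r s e d : R).

Definition sqdist p q : R := (p.1 - q.1) ^+ 2 + (p.2 - q.2) ^+ 2.

Lemma sqdist_ge0 p q : 0 <= sqdist p q.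
Proof. by rewrite addr_ge0 // sqr_ge0. Qed.

Lemma edist_ltE p q r : 0 < r -> (Defs.edist p q < r) = (sqdist p q < r ^+ 2).
Proof.
move=> r0; rewrite /Defs.edist -/(sqdist p q).
by rewrite -{1}(ger0_norm (ltW r0)) -sqrtr_sqr ltr_sqrt // exprn_gt0.
Qed.

Lemma edistpp p : Defs.edist p p = 0.
Proof. by rewrite /Defs.edist !subrr expr0n /= addr0 sqrtr0. Qed.

Lemma edist_lt_half_trans p q w r : 0 < r ->
  Defs.edist p q < r / 2 -> Defs.edist q w < r / 2 -> Defs.edist p w < r.
Proof.
move=> r0; have r20 : 0 < r / 2 by rewrite divr_gt0.
rewrite !edist_ltE // /sqdist => pq qw.
(* |p - w|^2 <= 2 |p - q|^2 + 2 |q - w|^2, the difference being |p - 2 q + w|^2 *)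
have : 0 <= (p.1 - 2 * q.1 + w.1) ^+ 2 + (p.2 - 2 * q.2 + w.2) ^+ 2.
  by rewrite addr_ge0 // sqr_ge0.
have -> : r ^+ 2 = 4 * (r / 2) ^+ 2 by field.
nra.
Qed.

Lemma edist_ge_coord p q e : 0 < e -> e <= Defs.edist p q ->
  e / 2 <= `|p.1 - q.1| \/ e / 2 <= `|p.2 - q.2|.
Proof.
move=> e0 epq; apply: contrapT => /not_orP [/negP + /negP].
rewrite -!ltNge => lt1 lt2.
move: epq; rewrite leNgt edist_ltE // /sqdist => /negP; apply.
rewrite -(real_normK (num_real (p.1 - q.1))) -(real_normK (num_real (p.2 - q.2))).
have := normr_ge0 (p.1 - q.1); have := normr_ge0 (p.2 - q.2).
nra.
Qed.

Lemma rel_open_rel_interior (X A : set (pt R)) : rel_open X (rel_interior X A).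
Proof.
split; first by move=> y [].
apply/seteqP; split => y; last by move=> [_ []].
move=> [Xy [Ay [r r0 ballA]]].
have r20 : 0 < r / 2 by rewrite divr_gt0.
split => //; split; first by split => //; split => //; exists r.
exists (r / 2) => // w Xw yw; split => //; split.
  by apply: ballA => //; apply: lt_trans yw _; lra.
exists (r / 2) => // v Xv wv.
by apply: ballA => //; exact: edist_lt_half_trans r0 yw wv.
Qed.

Definition path_in (A : set (pt R)) a b (gam : R -> pt R) : Prop :=
  [/\ {within `[0, 1], continuous gam}, gam 0 = a, gam 1 = b &
      forall s, s \in `[0, 1] -> A (gam s)].

Definition locally_path_connected (X : set (pt R)) : Prop :=
  forall x d, X x -> 0 < d ->
  exists2 eps, 0 < eps & forall z, X z -> Defs.edist x z < eps ->
    exists gam, path_in (X `&` [set y | Defs.edist x y < d]) x z gam.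

Definition finite_path_transversal (X : set (pt R)) : Prop :=
  forall e, 0 < e -> exists S : seq (pt R), forall a b gam,
    path_in X a b gam -> e <= Defs.edist a b -> exists2 t, t \in `[0, 1] & gam t \in S.

Definition segment x z s : pt R := (x.1 + s * (z.1 - x.1), x.2 + s * (z.2 - x.2)).

Lemma segment0 x z : segment x z 0 = x.
Proof. by rewrite /segment !mul0r !addr0; case: x. Qed.

Lemma segment1 x z : segment x z 1 = z.
Proof. by rewrite /segment !mul1r !subrKC; case: z. Qed.

Lemma segment_continuous x z : continuous (segment x z).
Proof.
have affine_cont (a b : R) : continuous (fun s => a + s * (b - a)).
  move=> s; apply: cvgD; first exact: cvg_cst.
  by apply: cvgM; [exact: cvg_id | exact: cvg_cst].
by move=> s; exact: (cvg_pair (affine_cont _ _ s) (affine_cont _ _ s)).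
Qed.

Lemma sqdist_segment x z s : sqdist x (segment x z s) = s ^+ 2 * sqdist x z.
Proof. by rewrite /sqdist /segment /=; ring. Qed.

Definition pnorm p : R := Num.sqrt (p.1 ^+ 2 + p.2 ^+ 2).

Definition radial p : pt R := (p.1 / pnorm p, p.2 / pnorm p).

Lemma pnorm_continuous : continuous pnorm.
Proof.
move=> p; apply: (@continuous_comp _ _ _ (fun p : pt R => p.1 ^+ 2 + p.2 ^+ 2));
  last exact: sqrt_continuous.
have c1 := fst_continuous (x := p); have c2 := snd_continuous (x := p).
exact: cvgD (cvgM c1 c1) (cvgM c2 c2).
Qed.

Lemma radial_continuous p : pnorm p != 0 -> {for p, continuous radial}.
Proof.
move=> p0.
have cV : (fun q => (pnorm q)^-1) @ p --> (pnorm p)^-1.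
  by apply: cvgV => //; exact: pnorm_continuous.
have c1 : (fun q : pt R => q.1 / pnorm q) @ p --> p.1 / pnorm p.
  by apply: cvgM => //; exact: fst_continuous.
have c2 : (fun q : pt R => q.2 / pnorm q) @ p --> p.2 / pnorm p.
  by apply: cvgM => //; exact: snd_continuous.
exact: cvg_pair c1 c2.
Qed.

Lemma circle_radial p : pnorm p != 0 -> circle (radial p).
Proof.
move=> p0; rewrite /circle /radial /= !expr_div_n -mulrDl.
have -> : p.1 ^+ 2 + p.2 ^+ 2 = pnorm p ^+ 2 by rewrite sqr_sqrtr // addr_ge0 ?sqr_ge0.
by rewrite divff // expf_neq0.
Qed.

Lemma radial_id p : circle p -> radial p = p.
Proof. by rewrite /radial /pnorm /circle => ->; rewrite sqrtr1 !divr1; case: p. Qed.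

Lemma sqdist_circle x z : circle x -> circle z ->
  sqdist x z = 2 - 2 * (x.1 * z.1 + x.2 * z.2).
Proof.
rewrite /circle /sqdist /= => x1 z1.
transitivity ((x.1 ^+ 2 + x.2 ^+ 2) + (z.1 ^+ 2 + z.2 ^+ 2)
    - 2 * (x.1 * z.1 + x.2 * z.2)); first by ring.
by rewrite x1 z1; ring.
Qed.

Lemma circle_segment_sqnorm x z s : circle x -> circle z ->
  (segment x z s).1 ^+ 2 + (segment x z s).2 ^+ 2 = 1 - s * (1 - s) * sqdist x z.
Proof.
move=> Cx Cz; rewrite sqdist_circle //; move: Cx Cz; rewrite /circle /= => x1 z1.
transitivity ((1 - s) ^+ 2 * (x.1 ^+ 2 + x.2 ^+ 2) + s ^+ 2 * (z.1 ^+ 2 + z.2 ^+ 2)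
    + 2 * s * (1 - s) * (x.1 * z.1 + x.2 * z.2)).
  by rewrite /segment /=; ring.
by rewrite x1 z1; ring.
Qed.

Lemma circle_segment_dot x z s : circle x -> circle z ->
  x.1 * (segment x z s).1 + x.2 * (segment x z s).2 = 1 - s * sqdist x z / 2.
Proof.
move=> Cx Cz; rewrite sqdist_circle //; move: Cx; rewrite /circle /= => x1.
transitivity ((1 - s) * (x.1 ^+ 2 + x.2 ^+ 2) + s * (x.1 * z.1 + x.2 * z.2)).
  by rewrite /segment /=; ring.
by rewrite x1; field.
Qed.

Lemma sqdist_radial x m : circle x -> pnorm m != 0 ->
  sqdist x (radial m) = 2 - 2 * ((x.1 * m.1 + x.2 * m.2) / pnorm m).
Proof.
rewrite /circle /= => x1 m0.
have Nm : pnorm m ^+ 2 = m.1 ^+ 2 + m.2 ^+ 2 by rewrite sqr_sqrtr // addr_ge0 ?sqr_ge0.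
transitivity ((x.1 ^+ 2 + x.2 ^+ 2) - 2 * ((x.1 * m.1 + x.2 * m.2) / pnorm m)
    + (m.1 ^+ 2 + m.2 ^+ 2) / pnorm m ^+ 2).
  by rewrite /sqdist /radial /=; field.
by rewrite x1 -Nm divff ?expf_neq0 //; ring.
Qed.

(* |x - z| < 1 keeps the chord [x, z] away from the origin, so that it can be
   projected radially onto the circle. *)
Lemma circle_chord x z s : circle x -> circle z -> sqdist x z < 1 -> 0 <= s <= 1 ->
  pnorm (segment x z s) != 0 /\ sqdist x (radial (segment x z s)) <= sqdist x z.
Proof.
move=> Cx Cz xz1 /andP [s0 s1]; have w0 := sqdist_ge0 x z.
have /andP [M0 M1] : 0 < (segment x z s).1 ^+ 2 + (segment x z s).2 ^+ 2 <= 1.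
  have st14 : s * (1 - s) <= 1 / 4.
    rewrite -subr_ge0; have -> : 1 / 4 - s * (1 - s) = (s - 1 / 2) ^+ 2 by field.
    exact: sqr_ge0.
  have st0 : 0 <= s * (1 - s) by rewrite mulr_ge0 // subr_ge0.
  rewrite circle_segment_sqnorm //; move: (s * (1 - s)) st14 st0 => t t14 t0.
  by apply/andP; split; nra.
have N0 : 0 < pnorm (segment x z s) by rewrite sqrtr_gt0.
have N1 : pnorm (segment x z s) <= 1 by rewrite -sqrtr1 ler_sqrt.
split; first by rewrite gt_eqF.
rewrite sqdist_radial ?gt_eqF // circle_segment_dot //.
move: (pnorm _) N0 N1 (sqdist x z) xz1 w0 => N N0 N1 w xz1 w0.
have sw : s * w <= w by rewrite ler_piMl.
have : 1 - s * w / 2 <= (1 - s * w / 2) / N by rewrite ler_pdivlMr // ler_piMr //; lra.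
lra.
Qed.

Lemma path_in_ends (A : set (pt R)) a b gam : path_in A a b gam -> A a /\ A b.
Proof.
move=> [_ <- <- gamA]; split; apply: gamA; rewrite in_itv /= ?lexx ?ler01 //.
Qed.

Lemma circle_locally_path_connected : locally_path_connected (@circle R).
Proof.
move=> x d Cx d0; have md0 : 0 < Num.min d 1 by rewrite lt_min d0 ltr01.
exists (Num.min d 1) => // z Cz; rewrite edist_ltE // => xz.
have m1 : Num.min d 1 <= 1 by rewrite ge_min lexx orbT.
have md : Num.min d 1 <= d by rewrite ge_min lexx.
have xz1 : sqdist x z < 1 by apply: (lt_le_trans xz); rewrite expr_le1 // ltW.
have xzd : sqdist x z < d ^+ 2.
  by apply: (lt_le_trans xz); rewrite lerXn2r // ?nnegrE ltW.
have chord s : s \in `[0, 1] ->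
    pnorm (segment x z s) != 0 /\ sqdist x (radial (segment x z s)) <= sqdist x z.
  by rewrite in_itv /=; exact: circle_chord.
exists (radial \o segment x z); split.
- apply: continuous_in_subspaceT => s; rewrite inE /= => /chord [mz _].
  by apply: continuous_comp; [exact: segment_continuous | exact: radial_continuous].
- by rewrite /= segment0 radial_id.
- by rewrite /= segment1 radial_id.
- move=> s /chord [mz le_xz]; split; first exact: circle_radial.
  by rewrite /= edist_ltE //; apply: le_lt_trans le_xz xzd.
Qed.

Lemma unit_interval_segment x z s : unit_interval x -> unit_interval z ->
  0 <= s <= 1 -> unit_interval (segment x z s).
Proof.
move=> [/andP [x0 x1] x2] [/andP [z0 z1] z2] /andP [s0 s1].
rewrite /unit_interval /segment /= x2 z2 subrr mulr0 addr0; split => //.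
by apply/andP; split; nra.
Qed.

Lemma unit_interval_locally_path_connected : locally_path_connected (@unit_interval R).
Proof.
move=> x d Ix d0; exists d => // z Iz xz; exists (segment x z); split.
- by apply: continuous_subspaceT; exact: segment_continuous.
- exact: segment0.
- exact: segment1.
- move=> s; rewrite in_itv /= => s01; split; first exact: unit_interval_segment.
  move: xz; rewrite /= !edist_ltE // sqdist_segment; apply: le_lt_trans.
  by case/andP: s01 => s0 s1; rewrite ler_piMl ?sqdist_ge0 // expr_le1.
Qed.

Definition grid e : seq R :=
  [seq -1 + j%:R * (e / 4) | j <- iota 0 (Num.truncn (8 / e)).+2].

Lemma grid_between e lo hi : 0 < e -> -1 <= lo -> hi <= 1 -> lo + e / 2 <= hi ->
  exists2 c, c \in grid e & lo <= c <= hi.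
Proof.
move=> e0 lo1 hi1 lohi; have e40 : 0 < e / 4 by rewrite divr_gt0.
have k0 : 0 <= (lo + 1) / (e / 4) by apply: divr_ge0; [lra | exact: ltW].
have /andP [k1 k2] := truncn_itv k0.
set k := Num.truncn _ in k1 k2.
have kN : (k <= Num.truncn (8 / e))%N.
  apply: le_truncn; have -> : 8 / e = 2 / (e / 4) by field; rewrite gt_eqF.
  by rewrite ler_pM2r ?invr_gt0 //; lra.
exists (-1 + k.+1%:R * (e / 4)).
  by apply/mapP; exists k.+1; rewrite // mem_iota add0n !ltnS.
rewrite ler_pdivlMr // in k1; rewrite ltr_pdivrMr // in k2.
by rewrite -natr1 mulrDl mul1r; apply/andP; split; lra.
Qed.

Lemma path_crosses_grid (A : set (pt R)) (pr : pt R -> R) a b gam e :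
  0 < e -> continuous pr -> (forall p, A p -> -1 <= pr p <= 1) ->
  path_in A a b gam -> e / 2 <= `|pr a - pr b| ->
  exists2 t, t \in `[0, 1] & pr (gam t) \in grid e.
Proof.
move=> e0 pr_cont prA gamA ab.
have [/prA /andP [a1 a2] /prA /andP [b1 b2]] := path_in_ends gamA.
case: gamA => gam_cont gam0 gam1 _.
have [c gc /andP [c_lo c_hi]] :
    exists2 c, c \in grid e & Num.min (pr a) (pr b) <= c <= Num.max (pr a) (pr b).
  apply: grid_between => //; rewrite ?le_min ?ge_max ?a1 ?b1 ?a2 ?b2 //.
  case: (leP (pr a) (pr b)) => hab; move: ab.
  - by rewrite distrC ger0_norm ?subr_ge0 // => ?; lra.
  - by rewrite ger0_norm ?subr_ge0 ?(ltW hab) // => ?; lra.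
have [t t01 gamc] : exists2 t, t \in `[0, 1] & (pr \o gam) t = c.
  apply: IVT; rewrite ?ler01 //=; last by rewrite gam0 gam1 c_lo c_hi.
  exact: within_continuous_comp (fun p _ => pr_cont p) gam_cont.
by exists t => //; rewrite -gamc in gc.
Qed.

Lemma circle_coord_bound p : circle p -> (-1 <= p.1 <= 1) && (-1 <= p.2 <= 1).
Proof.
rewrite /circle /= => Cp; have := sqr_ge0 p.1; have := sqr_ge0 p.2 => h2 h1.
by apply/andP; split; apply/andP; split; nra.
Qed.

Definition circle_points c : seq (pt R) :=
  let r := Num.sqrt (1 - c ^+ 2) in [:: (c, r); (c, - r); (r, c); (- r, c)].

Lemma circle_in_points (a b : R) : a ^+ 2 + b ^+ 2 = 1 ->
  (a, b) \in circle_points a /\ (b, a) \in circle_points a.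
Proof.
move=> ab; rewrite /circle_points; have -> : Num.sqrt (1 - a ^+ 2) = `|b|.
  by rewrite -ab addrC addKr sqrtr_sqr.
by case: (lerP 0 b) => b0; [rewrite ger0_norm // | rewrite ltr0_norm // opprK];
  split; rewrite !in_cons !eqxx ?orbT.
Qed.

Lemma circle_finite_path_transversal : finite_path_transversal (@circle R).
Proof.
move=> e e0; exists (flatten [seq circle_points c | c <- grid e]) => a b gam gamA eab.
have gam_circle t : t \in `[0, 1] -> circle (gam t) by case: gamA => _ _ _; apply.
case: (edist_ge_coord e0 eab) => ab.
- have [|t t01 gt] := path_crosses_grid e0 fst_continuous _ gamA ab.
    by move=> p /circle_coord_bound /andP [].
  exists t => //; apply/flatten_mapP; exists (gam t).1 => //.
  by move: (gam t) (gam_circle t t01) => [p1 p2] /circle_in_points [].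
- have [|t t01 gt] := path_crosses_grid e0 snd_continuous _ gamA ab.
    by move=> p /circle_coord_bound /andP [].
  exists t => //; apply/flatten_mapP; exists (gam t).2 => //.
  move: (gam t) (gam_circle t t01) => [p1 p2].
  by rewrite /circle /= addrC => /circle_in_points [].
Qed.

Lemma unit_interval_finite_path_transversal : finite_path_transversal (@unit_interval R).
Proof.
move=> e e0; exists [seq (c, 0) | c <- grid e] => a b gam gamA eab.
have [[_ a2] [_ b2]] := path_in_ends gamA.
have ab : e / 2 <= `|a.1 - b.1|.
  by case: (edist_ge_coord e0 eab) => //; rewrite a2 b2 subrr normr0; lra.
have [|t t01 gt] := path_crosses_grid e0 fst_continuous _ gamA ab.
  by move=> p [/andP [p0 p1] _]; apply/andP; split => //; lra.
exists t => //; case: gamA => _ _ _ /(_ t t01) [_ gt2].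
by rewrite (surjective_pairing (gam t)) gt2; exact: (map_f (fun c : R => (c, 0))).
Qed.

End Plane.

Section Wandering.
Variables (R : realType) (X : set (pt R)) (f g : pt R -> pt R).
Hypothesis fg : homeomorphism_on X f g.

Definition wandering (U : set (pt R)) : Prop :=
  forall n y, (0 < n)%N -> U y -> ~ U (iter n f y).

Lemma iter_homeo_in n p : X p -> X (iter n f p).
Proof. by case: fg => fX _ _ _ _; elim: n => //= n IH /IH /fX. Qed.

Lemma iter_homeoK n p : X p -> iter n g (iter n f p) = p.
Proof.
case: fg => _ _ gfK _ _; elim: n p => // n IH p Xp.
by rewrite iterSr iterS gfK ?IH //; exact: iter_homeo_in.
Qed.

Lemma iter_homeo_continuous n : {within X, continuous (iter n f)}.
Proof.
case: fg => _ _ _ _ [f_cont _]; elim: n => [|n IH].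
  by apply: continuous_subspaceT => p; exact: cvg_id.
rewrite (_ : iter n.+1 f = f \o iter n f); last by apply: funext => p; rewrite iterS.
by apply: within_continuous_comp_within _ IH f_cont => p; exact: iter_homeo_in.
Qed.

Lemma wandering_iter_neq U : U `<=` X -> wandering U ->
  forall n m u v, (n < m)%N -> U u -> U v -> iter n f u <> iter m f v.
Proof.
move=> UX wU n m u v nm Uu Uv; have Xv := UX _ Uv.
rewrite -(subnKC (ltnW nm)) iterD => /(congr1 (iter n g)).
rewrite !iter_homeoK; [|exact: iter_homeo_in|exact: UX].
by move=> uv; apply: (wU (m - n)%N v); rewrite ?subn_gt0 // -uv.
Qed.

Lemma wandering_forward_proximal U x d :
  locally_path_connected X -> finite_path_transversal X ->
  U `<=` X -> wandering U -> X x -> 0 < d ->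
  (forall y, X y -> Defs.edist x y < d -> U y) ->
  exists2 eps, 0 < eps & forall z, X z -> Defs.edist x z < eps ->
    forall e, 0 < e -> exists n : nat, Defs.edist (iter n f x) (iter n f z) < e.
Proof.
move=> lpc fpt UX wU Xx d0 ballU.
have [eps eps0 paths] := lpc x d Xx d0.
exists eps => // z Xz xz e e0.
have [gam [gam_cont gam0 gam1 gamA]] := paths z Xz xz.
have gamU s : s \in `[0, 1] -> U (gam s) by move=> /gamA [Xs xs]; exact: ballU.
apply: contrapT => far.
have [S hitS] := fpt e e0.
have hit n : exists u, U u /\ iter n f u \in S.
  have gam_n : path_in X (iter n f x) (iter n f z) (iter n f \o gam).
    split; [|by rewrite /= gam0|by rewrite /= gam1|].
    - apply: within_continuous_comp_within _ gam_cont (iter_homeo_continuous (n := n)).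
      by move=> s /gamA [].
    - by move=> s /gamA [Xs _]; exact: iter_homeo_in.
  have [|t t01 St] := hitS _ _ _ gam_n.
    by rewrite leNgt; apply/negP => close; apply: far; exists n.
  by exists (gam t); split; first exact: gamU.
have [u hu] := choice hit.
have [n [m [nm _ unm]]] := pigeonhole_seq (fun n _ => proj2 (hu n)).
exact: (wandering_iter_neq UX wU nm (proj1 (hu n)) (proj1 (hu m)) unm).
Qed.

End Wandering.

Theorem lemma3p5 (R : realType) (X : set (pt R))
  (hX : X = @circle R \/ X = @unit_interval R)
  (f g : pt R -> pt R) (hf : homeomorphism_on X f g)
  (mu : probability (pt R) R) (hmuX : mu X = 1%E)
  (hdist : inner_distal X f g mu) :
  measure_support X mu `<=` nonwandering X f.
Proof.
move=> x [Xx x_supp]; split => // U UX [_ [_ [d d0 ballU]]].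
apply: contrapT => U_returns.
have wU : wandering f U.
  by move=> n y n0 Uy Uny; apply: U_returns; exists n; split => //; exists y.
have [lpc fpt] : locally_path_connected X /\ finite_path_transversal X.
  case: hX => ->; split.
  - exact: circle_locally_path_connected.
  - exact: circle_finite_path_transversal.
  - exact: unit_interval_locally_path_connected.
  - exact: unit_interval_finite_path_transversal.
have [eps eps0 prox] := wandering_forward_proximal hf lpc fpt UX wU Xx d0 ballU.
set W := rel_interior X (proximal_cell X f g x).
have Wx : W x.
  split => //; split.
    by split => // e e0; exists 0%Z; rewrite /= edistpp.
  exists eps => // z Xz xz; split => // e e0.
  by have [n ?] := prox z Xz xz e e0; exists (Posz n).
have := x_supp W (rel_open_rel_interior X _) Wx.
by rewrite /W hdist // ltxx.
Qed.
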